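(* Let $0<s<1$ and $M\in\mathbb R\setminus\{0\}$. For $n\ge1$ let $\mu_n^1$ be the unique real root of $\mu^3+\rho_n\mu-M\rho_n=0$. Then $$\frac{|M|}{\frac{M^2}{\rho_1}+1}\le|\mu_n^1|<|M|\qquad\text{for all }n\ge1.$$ Moreover, if $\frac12<s<1$, the sequence $(|\mu_n^1|)_{n\ge1}$ is (strictly) increasing.
   Context: $(-d_x^2)^s$ denotes the fractional Laplacian $C_s\,\mathrm{P.V.}\int_{\mathbb R}\frac{u(x)-u(y)}{|x-y|^{1+2s}}dy$; $0<\rho_1\le\rho_2\le\cdots\to\infty$ are the eigenvalues (with multiplicity) of its realization on $L^2(-1,1)$ with zero exterior Dirichlet condition ($u=0$ on $\mathbb R\setminus(-1,1)$), i.e. the self-adjoint operator associated with the form $\frac{C_s}{2}\iint\frac{(u(x)-u(y))(v(x)-v(y))}{|x-y|^{1+2s}}dxdy$ on $\{u\in H^s(\mathbb R):u=0\text{ outside }(-1,1)\}$. Standing fact used: for $\frac12<s<1$ these eigenvalues are simple. *)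

From Stdlib Require Import Reals Lra.
Open Scope R_scope.

(* The Dirichlet eigenvalues 0 < rho_1 <= rho_2 <= ... -> oo of the fractional
   Laplacian (-d_x^2)^s on (-1,1) cannot be constructed in Stdlib (no Lebesgue
   integration / fractional Sobolev spaces).  We therefore record, as an
   abstract interface, exactly the properties of this sequence that the
   context fixes: positivity, monotonicity (eigenvalues listed with
   multiplicity, increasingly), divergence to +oo, and the standing fact that
   for 1/2 < s < 1 the eigenvalues are simple (hence strictly increasing).
   Indexing is 1-based: rho 1 is the first eigenvalue; rho 0 is unused. *)
Definition frac_dirichlet_eigenvalues (s : R) (rho : nat -> R) : Prop :=
  (forall n, (1 <= n)%nat -> 0 < rho n) /\
  (forall n, (1 <= n)%nat -> rho n <= rho (S n)) /\
  (forall K, exists N, forall n, (N <= n)%nat -> K < rho n) /\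
  (1/2 < s -> forall n, (1 <= n)%nat -> rho n < rho (S n)).

(* Writing the cubic as  mu (mu^2 + rho) = M rho  and taking absolute values
   shows that a = |mu| solves the same cubic with M replaced by m = |M| > 0;
   so everything reduces to a nonnegative root  a  of  a^3 + r a - m r = 0
   with  m, r > 0.  For such a root:
   - 0 < a < m, because  a^3 = r (m - a)  and  a = 0  would force  m r = 0;
   - a = m r / (a^2 + r) >= m r / (m^2 + r) = m / (m^2/r + 1), and the latter
     quantity increases with r, so the bound for r = rho_1 holds for all n;
   - r = a^3 / (m - a) is strictly increasing in a on (0, m), hence a is a
     strictly increasing function of r.
   The theorem follows since rho_1 <= rho_n, and rho_n < rho_(n+1) when the
   eigenvalues are simple (1/2 < s < 1). *)
From Stdlib Require Import Reals Lra Lia Psatz.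
Open Scope R_scope.

(* The cubic is odd in (mu, M): |mu| solves it with M replaced by |M|. *)
Lemma cubic_root_abs (M r x : R) : 0 < r ->
  x ^ 3 + r * x - M * r = 0 -> Rabs x ^ 3 + r * Rabs x - Rabs M * r = 0.
Proof.
  intros Hr E.
  assert (Hfact : x * (x ^ 2 + r) = M * r) by lra.
  assert (Habs : Rabs x * (x ^ 2 + r) = Rabs M * r).
  { rewrite <- (Rabs_pos_eq (x ^ 2 + r)) by nra.
    rewrite <- (Rabs_pos_eq r) at 2 by lra.
    rewrite <- !Rabs_mult, Hfact; reflexivity. }
  assert (Hsq : x ^ 2 = Rabs x ^ 2).
  { rewrite RPow_abs, Rabs_pos_eq; [reflexivity|nra]. }
  rewrite Hsq in Habs. lra.
Qed.

Section PositiveRoot.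

Variables m r a : R.
Hypothesis Hm : 0 < m.
Hypothesis Hr : 0 < r.
Hypothesis Ha : 0 <= a.
Hypothesis Hroot : a ^ 3 + r * a - m * r = 0.

Lemma pos_root_range : 0 < a < m.
Proof.
  assert (Ha0 : 0 < a).
  { destruct (Req_dec a 0) as [->|]; [|lra].
    assert (m * r = 0) by lra. nra. }
  split; [exact Ha0|].
  assert (0 < a ^ 3) by (apply pow_lt; lra). nra.
Qed.

(* Lower bound: a = m r / (a^2 + r) >= m r / (m^2 + r). *)
Lemma pos_root_lower_bound : m / (m ^ 2 / r + 1) <= a.
Proof.
  destruct pos_root_range as [Ha0 Ham].
  replace (m / (m ^ 2 / r + 1)) with (m * r / (m ^ 2 + r)) by (field; nra).
  apply Rmult_le_reg_r with (m ^ 2 + r); [nra|].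
  unfold Rdiv; rewrite Rmult_assoc, Rinv_l by nra.
  assert (0 <= a * (m ^ 2 - a ^ 2)) by (apply Rmult_le_pos; nra).
  lra.
Qed.

End PositiveRoot.


Lemma lower_bound_mono (m r1 r : R) : 0 <= m -> 0 < r1 -> r1 <= r ->
  m / (m ^ 2 / r1 + 1) <= m / (m ^ 2 / r + 1).
Proof.
  intros Hm Hr1 Hr.
  assert (Hq : m ^ 2 / r <= m ^ 2 / r1).
  { unfold Rdiv; apply Rmult_le_compat_l; [nra|].
    apply Rinv_le_contravar; lra. }
  assert (Hq0 : 0 <= m ^ 2 / r) by (apply Rle_mult_inv_pos; nra).
  unfold Rdiv at 1 3; apply Rmult_le_compat_l; [exact Hm|].
  apply Rinv_le_contravar; lra.
Qed.

(* Nonnegative roots increase strictly with r, since  r = a^3 / (m - a). *)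
Lemma pos_root_increasing (m r r' a a' : R) : 0 < m -> 0 < r -> r < r' ->
  0 <= a -> a ^ 3 + r * a - m * r = 0 ->
  0 <= a' -> a' ^ 3 + r' * a' - m * r' = 0 -> a < a'.
Proof.
  intros Hm Hr Hrr Ha E Ha' E'.
  destruct (pos_root_range m r a Hm Hr Ha E) as [Ha0 Ham].
  destruct (pos_root_range m r' a' Hm ltac:(lra) Ha' E') as [Ha'0 Ha'm].
  destruct (Rlt_le_dec a a') as [Hlt|Hle]; [exact Hlt|exfalso].
  assert (Hcube : a' ^ 3 <= a ^ 3) by (apply pow_incr; lra).
  assert (r' * (m - a') <= r * (m - a')) by nra.
  nra.
Qed.

Lemma first_eigenvalue_min (s : R) (rho : nat -> R) :
  frac_dirichlet_eigenvalues s rho ->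
  forall n, (1 <= n)%nat -> rho 1%nat <= rho n.
Proof.
  intros [_ [Hmon _]] n Hn.
  induction Hn as [|n Hn IH]; [lra|].
  eapply Rle_trans; [exact IH|apply Hmon; exact Hn].
Qed.

Theorem lemma3p3 (s M : R) (rho mu : nat -> R)
  (hs : 0 < s < 1) (hM : M <> 0)
  (hrho : frac_dirichlet_eigenvalues s rho)
  (hmu : forall n, (1 <= n)%nat -> mu n ^ 3 + rho n * mu n - M * rho n = 0) :
  (forall n, (1 <= n)%nat ->
     Rabs M / (M ^ 2 / rho 1%nat + 1) <= Rabs (mu n) < Rabs M) /\
  (1/2 < s -> forall n, (1 <= n)%nat -> Rabs (mu n) < Rabs (mu (S n))).
Proof.
  pose proof hrho as [Hpos [_ [_ Hsimple]]].
  assert (Hm : 0 < Rabs M) by (apply Rabs_pos_lt; exact hM).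
  assert (Habs : forall n, (1 <= n)%nat ->
            Rabs (mu n) ^ 3 + rho n * Rabs (mu n) - Rabs M * rho n = 0)
    by (intros n Hn; apply cubic_root_abs; auto).
  split.
  - intros n Hn.
    pose proof (Hpos n Hn) as Hrn.
    pose proof (Habs n Hn) as E.
    replace (M ^ 2) with (Rabs M ^ 2) by (rewrite RPow_abs; apply Rabs_pos_eq; nra).
    split.
    + eapply Rle_trans;
        [apply lower_bound_mono; [lra|apply Hpos; lia|
                                  exact (first_eigenvalue_min s rho hrho n Hn)]|].
      exact (pos_root_lower_bound _ _ _ Hm Hrn (Rabs_pos _) E).
    + exact (proj2 (pos_root_range _ _ _ Hm Hrn (Rabs_pos _) E)).
  - intros Hs n Hn.
    apply (pos_root_increasing (Rabs M) (rho n) (rho (S n)));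
      auto using Rabs_pos, Hsimple with arith.
Qed.
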